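(* Let $I$ be a fuzzy implication satisfying $I(1,y)=y$ for all $y\in[0,1]$, and let $A$ be an aggregation function having $1$ as a left neutral element ($A(1,x)=x$ for all $x$). Then $I$ satisfies (A5) with $A$ if and only if for all nonempty sets $U,V$, all normal fuzzy sets $D$ on $U$ and $B$ on $V$, and all $x\in U$, $y\in V$, one has $A(D(x),I(D(x),B(y)))\le B(y)$.
   Context: Aggregation function: $A:[0,1]^2\to[0,1]$ non-decreasing in each variable with $A(0,0)=0$, $A(1,1)=1$. Fuzzy implication: $I:[0,1]^2\to[0,1]$ non-increasing in the first and non-decreasing in the second variable with $I(0,0)=I(1,1)=1$, $I(1,0)=0$. A fuzzy set on a nonempty set $U$ is a map $U\to[0,1]$, normal if it attains $1$. ''$I$ satisfies (A5) with $A$'' means: for all nonempty sets $U,V$, all normal fuzzy sets $D$ on $U$, $B$ on $V$ and every $y\in V$, $\sup_{x\in U}A(D(x),I(D(x),B(y)))=B(y)$. *)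

(* real numbers R. Functions [0,1]^2 -> [0,1] are modelled as
   R -> R -> R with all properties required on [0,1]. *)
From Stdlib Require Import Reals.
Open Scope R_scope.

Definition unit_I (x : R) : Prop := 0 <= x <= 1.

Definition is_aggregation (A : R -> R -> R) : Prop :=
  (forall x y, unit_I x -> unit_I y -> unit_I (A x y)) /\
  (forall x1 x2 y, unit_I x1 -> unit_I x2 -> unit_I y -> x1 <= x2 -> A x1 y <= A x2 y) /\
  (forall x y1 y2, unit_I x -> unit_I y1 -> unit_I y2 -> y1 <= y2 -> A x y1 <= A x y2) /\
  A 0 0 = 0 /\ A 1 1 = 1.

Definition is_fuzzy_implication (I : R -> R -> R) : Prop :=
  (forall x y, unit_I x -> unit_I y -> unit_I (I x y)) /\
  (forall x1 x2 y, unit_I x1 -> unit_I x2 -> unit_I y -> x1 <= x2 -> I x2 y <= I x1 y) /\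
  (forall x y1 y2, unit_I x -> unit_I y1 -> unit_I y2 -> y1 <= y2 -> I x y1 <= I x y2) /\
  I 0 0 = 1 /\ I 1 1 = 1 /\ I 1 0 = 0.

Definition fuzzy_set {U : Type} (D : U -> R) : Prop := forall x, unit_I (D x).

Definition normal {U : Type} (D : U -> R) : Prop := exists x, D x = 1.

Definition satisfies_A5 (I A : R -> R -> R) : Prop :=
  forall (U V : Type), inhabited U -> inhabited V ->
  forall (D : U -> R) (B : V -> R),
    fuzzy_set D -> normal D -> fuzzy_set B -> normal B ->
    forall y : V,
      is_lub (fun r => exists x : U, r = A (D x) (I (D x) (B y))) (B y).

From Stdlib Require Import Reals.
Open Scope R_scope.

(* At a point x with D x = 1 the boundary laws give A (1, I (1, B y)) = B y, so
   B y is always attained and the supremum in (A5) is B y exactly when B y is an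
   upper bound. *)

Lemma is_lub_of_attained_upper_bound (E : R -> Prop) (m : R) :
  is_upper_bound E m -> E m -> is_lub E m.
Proof.
  intros Hub Hm. split.
  - exact Hub.
  - intros b Hb. exact (Hb m Hm).
Qed.

Lemma aggregation_implication_at_one (I A : R -> R -> R) (y : R) :
  (forall y, unit_I y -> I 1 y = y) ->
  (forall x, unit_I x -> A 1 x = x) ->
  unit_I y -> A 1 (I 1 y) = y.
Proof.
  intros HI1 HA1 Hy. rewrite HI1 by exact Hy. exact (HA1 y Hy).
Qed.

Theorem proposition3p9 (I A : R -> R -> R) :
  is_fuzzy_implication I ->
  (forall y, unit_I y -> I 1 y = y) ->
  is_aggregation A ->
  (forall x, unit_I x -> A 1 x = x) ->
  (satisfies_A5 I A <->
   (forall (U V : Type), inhabited U -> inhabited V ->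
    forall (D : U -> R) (B : V -> R),
      fuzzy_set D -> normal D -> fuzzy_set B -> normal B ->
      forall (x : U) (y : V), A (D x) (I (D x) (B y)) <= B y)).
Proof.
  intros _ HI1 _ HA1. split.
  - intros HA5 U V hU hV D B fD nD fB nB x y.
    destruct (HA5 U V hU hV D B fD nD fB nB y) as [Hub _].
    apply Hub. exists x. reflexivity.
  - intros Hle U V hU hV D B fD nD fB nB y.
    apply is_lub_of_attained_upper_bound.
    + intros r [x ->]. exact (Hle U V hU hV D B fD nD fB nB x y).
    + destruct nD as [x1 Hx1]. exists x1.
      rewrite Hx1. symmetry.
      exact (aggregation_implication_at_one I A (B y) HI1 HA1 (fB y)).
Qed.
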